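(* Let $\mathcal{P}$ be a finite set of atomic propositions, $u \in (2^{\mathcal{P}})^\ast$, $v \in (2^{\mathcal{P}})^+$, $\rho$ a regular expression, $\varphi$ a PSL formula, $m$ the number of states of the minimal deterministic finite automaton over $2^{\mathcal{P}}$ recognizing $L(\rho)$, and $b = m+1$. Then for every $i$ with $0 \le i \le |uv|-1$: $uv^\omega[i,\infty) \models \rho \mapsto \varphi$ if and only if for all $j \in \mathbb{N}$ with $i < j < |u| + b|v|$, $uv^\omega[i,j) \vdash \rho$ implies $uv^\omega[j-1,\infty) \models \varphi$.
   Context: Words: for $\alpha = a_0a_1\ldots$ and $i\le j$, $\alpha[i,j) = a_i\ldots a_{j-1}$ ($\alpha[i,i)=\varepsilon$), $\alpha[i]=a_i$, $\alpha[i,\infty)=a_ia_{i+1}\ldots$; $uv^\omega = uvvv\ldots$. Regular expressions: atomic expressions $\xi ::= p \in \mathcal{P} \mid \lnot \xi \mid \xi \lor \xi$, with $[\![p]\!] = \{A \subseteq \mathcal{P} : p \in A\}$, $[\![\lnot\xi]\!] = 2^{\mathcal{P}} \setminus [\![\xi]\!]$, $[\![\xi_1 \lor \xi_2]\!] = [\![\xi_1]\!] \cup [\![\xi_2]\!]$. Regular expressions $\rho ::= \varepsilon \mid \xi \mid \rho + \rho \mid \rho \circ \rho \mid \rho^\ast$. Matching on infixes of a word $w$: $w[i,j) \vdash \varepsilon$ iff $j=i$; $w[i,j) \vdash \xi$ iff $j=i+1$ and $w[i] \in [\![\xi]\!]$; $w[i,j)\vdash \rho_1+\rho_2$ iff $w[i,j)\vdash\rho_1$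 or $w[i,j)\vdash\rho_2$; $w[i,j)\vdash \rho_1\circ\rho_2$ iff there is $k\in\{i,\ldots,j\}$ with $w[i,k)\vdash\rho_1$ and $w[k,j)\vdash\rho_2$; $w[i,j)\vdash\rho^\ast$ iff $j=i$ or there is $k\in\{i+1,\ldots,j\}$ with $w[i,k)\vdash\rho$ and $w[k,j)\vdash\rho^\ast$. $L(\rho)=\{w\in(2^{\mathcal{P}})^\ast : w[0,|w|)\vdash\rho\}$. PSL formulas: $\varphi ::= p\in\mathcal{P} \mid \lnot\varphi \mid \varphi\lor\varphi \mid \mathbf{X}\varphi \mid \varphi\,\mathbf{U}\,\varphi \mid \rho\mapsto\varphi$, evaluated on $\alpha\in(2^{\mathcal{P}})^\omega$: $\alpha\models p$ iff $p\in\alpha[0]$; $\alpha\models\lnot\varphi$ iff not $\alpha\models\varphi$; $\alpha\models\varphi_1\lor\varphi_2$ iff $\alpha\models\varphi_1$ or $\alpha\models\varphi_2$; $\alpha\models\mathbf{X}\varphi$ iff $\alpha[1,\infty)\models\varphi$; $\alpha\models\varphi_1\mathbf{U}\varphi_2$ iff there is $j$ with $\alpha[j,\infty)\models\varphi_2$ and $\alpha[i,\infty)\models\varphi_1$ for all $i<j$; $\alpha\models\rho\mapsto\varphi$ iff for all $i\in\mathbb{N}\setminus\{0\}$, $\alpha[0,i)\vdash\rho$ implies $\alpha[i-1,\infty)\models\varphi$. *)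

From mathcomp Require Import all_boot.
Set Implicit Arguments. Unset Strict Implicit. Unset Printing Implicit Defensive.

Section PSL.
Variable P : finType.

Definition letter := {set P}.
Definition oword := nat -> letter.

Inductive atom : Type :=
| AProp of P
| ANot of atom
| AOr of atom & atom.

Fixpoint atom_sem (x : atom) (A : letter) : bool :=
  match x with
  | AProp p => p \in A
  | ANot y => ~~ atom_sem y A
  | AOr y z => atom_sem y A || atom_sem z A
  end.

Inductive regex : Type :=
| REps
| RAtom of atom
| RPlus of regex & regex
| RCat of regex & regex
| RStar of regex.

(* w[i,j) |- rho, on a word given as a function of positions *)
Inductive rmatch (w : nat -> letter) : regex -> nat -> nat -> Prop :=
| M_eps i : rmatch w REps i i
| M_atom i x : atom_sem x (w i) -> rmatch w (RAtom x) i i.+1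
| M_plusl i j r1 r2 : rmatch w r1 i j -> rmatch w (RPlus r1 r2) i j
| M_plusr i j r1 r2 : rmatch w r2 i j -> rmatch w (RPlus r1 r2) i j
| M_cat i k j r1 r2 : i <= k <= j -> rmatch w r1 i k -> rmatch w r2 k j ->
    rmatch w (RCat r1 r2) i j
| M_star0 i r : rmatch w (RStar r) i i
| M_starS i k j r : i + 1 <= k <= j -> rmatch w r i k -> rmatch w (RStar r) k j ->
    rmatch w (RStar r) i j.

(* finite word as a function (positions beyond the end are never inspected) *)
Definition fword (w : seq letter) : nat -> letter := fun n => nth set0 w n.

Definition lang (r : regex) (w : seq letter) : Prop := rmatch (fword w) r 0 (size w).

Inductive psl : Type :=
| FProp of P
| FNot of psl
| FOr of psl & psl
| FNext of psl
| FUntil of psl & psl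
| FTrig of regex & psl.

Definition wsuffix (a : oword) (i : nat) : oword := fun n => a (i + n).

Fixpoint sat (a : oword) (f : psl) : Prop :=
  match f with
  | FProp p => p \in a 0
  | FNot g => ~ sat a g
  | FOr g h => sat a g \/ sat a h
  | FNext g => sat (wsuffix a 1) g
  | FUntil g h => exists j, sat (wsuffix a j) h /\ forall i, i < j -> sat (wsuffix a i) g
  | FTrig r g => forall i, 0 < i -> rmatch a r 0 i -> sat (wsuffix a i.-1) g
  end.

Definition lasso (u v : seq letter) : oword :=
  fun n => if n < size u then nth set0 u n else nth set0 v ((n - size u) %% size v).

Record dfa := DFA {
  dfa_state : finType;
  dfa_delta : dfa_state -> letter -> dfa_state;
  dfa_init : dfa_state;
  dfa_acc : pred dfa_state }.

Definition dfa_accepts (A : dfa) (w : seq letter) : bool :=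
  @dfa_acc A (foldl (@dfa_delta A) (@dfa_init A) w).

Definition dfa_recognizes (A : dfa) (r : regex) : Prop :=
  forall w, dfa_accepts A w <-> lang r w.

Definition min_dfa_size (r : regex) (m : nat) : Prop :=
  (exists A : dfa, dfa_recognizes A r /\ #|dfa_state A| = m) /\
  (forall A : dfa, dfa_recognizes A r -> m <= #|dfa_state A|).

End PSL.

From mathcomp Require Import all_boot zify.
From Stdlib Require Import FunctionalExtensionality.
Set Implicit Arguments. Unset Strict Implicit.

(* Read from a position i < |u| + |v|, the lasso word uv^w is |v|-periodic after
   |u|, so a DFA with m states for L(rho) visits two equal states among the m + 1
   positions |u| + |v| + k|v| (k <= m); cutting the factor between them removes a
   positive multiple of |v| from a match of rho without affecting acceptance.
   Hence every match ending at or beyond |u| + b|v| can be shortened to one ending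
   before that bound, by a multiple of |v| and at a position past |u|, where
   shifting by multiples of |v| leaves the suffix on which phi is evaluated
   unchanged. *)

Section RegexMatch.
Variable P : finType.
Implicit Types (w : nat -> letter P) (r : regex P).

Lemma rmatch_eq_on w (w' : nat -> letter P) r p q :
  rmatch w r p q -> (forall n, p <= n < q -> w n = w' n) -> rmatch w' r p q.
Proof.
elim=> {p q r} [i|i x wx|i j r1 r2 _ IH|i j r1 r2 _ IH|i k j r1 r2 ikj _ IH1 _ IH2
               |i r|i k j r ikj _ IH1 _ IH2] eq_w.
- exact: M_eps.
- by apply: M_atom; rewrite -eq_w //; lia.
- exact/M_plusl/IH.
- exact/M_plusr/IH.
- by apply: (M_cat ikj); [apply: IH1 | apply: IH2] => n n_in; apply: eq_w; lia.
- exact: M_star0.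
- by apply: (M_starS ikj); [apply: IH1 | apply: IH2] => n n_in; apply: eq_w; lia.
Qed.

Lemma rmatch_wsuffixW w r c p q :
  rmatch (wsuffix w c) r p q -> rmatch w r (c + p) (c + q).
Proof.
elim=> {p q r} [i|i x wx|i j r1 r2 _ IH|i j r1 r2 _ IH|i k j r1 r2 ikj _ IH1 _ IH2
               |i r|i k j r ikj _ IH1 _ IH2].
- exact: M_eps.
- by rewrite addnS; apply: M_atom.
- exact: M_plusl.
- exact: M_plusr.
- by apply: (M_cat (k := c + k)) IH1 IH2; lia.
- exact: M_star0.
- by apply: (M_starS (k := c + k)) IH1 IH2; lia.
Qed.

Lemma rmatch_wsuffixE w r c p q :
  c <= p -> rmatch w r p q -> rmatch (wsuffix w c) r (p - c) (q - c).
Proof.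
move=> + m; elim: m => {p q r} [i|i x wx|i j r1 r2 _ IH|i j r1 r2 _ IH
                              |i k j r1 r2 ikj _ IH1 _ IH2|i r|i k j r ikj _ IH1 _ IH2] ci.
- exact: M_eps.
- have -> : i.+1 - c = (i - c).+1 by lia.
  by apply: M_atom; rewrite /wsuffix subnKC.
- exact/M_plusl/IH.
- exact/M_plusr/IH.
- by apply: (M_cat (k := k - c)); [lia | apply: IH1 | apply: IH2; lia].
- exact: M_star0.
- by apply: (M_starS (k := k - c)); [lia | apply: IH1 | apply: IH2; lia].
Qed.

Lemma rmatch_wsuffix w r c p q :
  rmatch (wsuffix w c) r p q <-> rmatch w r (c + p) (c + q).
Proof.
split; first exact: rmatch_wsuffixW.
by move=> /(rmatch_wsuffixE (leq_addr p c)); rewrite !addKn.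
Qed.

End RegexMatch.

Section Segments.
Variable P : finType.
Implicit Types (a : oword P) (r : regex P).

Definition segment a i j : seq (letter P) := [seq a n | n <- iota i (j - i)].

Lemma size_segment a i j : size (segment a i j) = j - i.
Proof. by rewrite size_map size_iota. Qed.

Lemma fword_segment a i j n : n < j - i -> fword (segment a i j) n = a (i + n).
Proof. by move=> n_lt; rewrite /fword (nth_map 0) ?size_iota // nth_iota. Qed.

Lemma segment_cat a i k j : i <= k <= j -> segment a i j = segment a i k ++ segment a k j.
Proof.
move=> ikj; rewrite /segment -map_cat; have -> : j - i = (k - i) + (j - k) by lia.
by rewrite iotaD; congr (map a (_ ++ iota _ _)); lia.
Qed.

Lemma rmatch_segment a r i j : i <= j -> rmatch a r i j <-> lang r (segment a i j).
Proof.
move=> ij; rewrite /lang size_segment.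
have shift := rmatch_wsuffix a r i 0 (j - i); rewrite addn0 subnKC // in shift.
apply: iff_trans (iff_sym shift) _.
by split=> m; apply: (rmatch_eq_on m) => n /andP[_ n_lt]; rewrite fword_segment.
Qed.

Definition periodic_from a x0 d := forall n, x0 <= n -> a (n + d) = a n.

Lemma periodic_fromM a x0 d k : periodic_from a x0 d -> periodic_from a x0 (k * d).
Proof.
move=> per; elim: k => [|k IH] n x0n; first by rewrite addn0.
by rewrite mulSn addnA IH ?per //; lia.
Qed.

Lemma segment_periodic a x0 d i j :
  periodic_from a x0 d -> x0 <= i -> segment a (i + d) (j + d) = segment a i j.
Proof.
move=> per; rewrite /segment subnDr; move: (j - i) => n.
elim: n i => //= n IH i x0i.
by rewrite per // -addSn IH //; lia.
Qed.

Lemma wsuffixD a i k : wsuffix (wsuffix a i) k = wsuffix a (i + k).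
Proof. by apply: functional_extensionality => n; rewrite /wsuffix addnA. Qed.

Lemma wsuffix_periodic a x0 d n :
  periodic_from a x0 d -> x0 <= n -> wsuffix a (n + d) = wsuffix a n.
Proof.
move=> per x0n; apply: functional_extensionality => k.
by rewrite /wsuffix addnAC per //; lia.
Qed.

Lemma lasso_periodic (u v : seq (letter P)) :
  periodic_from (lasso u v) (size u) (size v).
Proof.
move=> n un; rewrite /lasso !ifF; try lia.
by rewrite -addnBAC // -modnDmr modnn addn0.
Qed.

Lemma dfa_accepts_segment (A : dfa P) r a i j :
  dfa_recognizes A r -> i <= j -> dfa_accepts A (segment a i j) <-> rmatch a r i j.
Proof. by move=> recA ij; rewrite rmatch_segment //; apply: recA. Qed.

End Segments.

Section Pumping.
Variables (P : finType) (A : dfa P) (a : oword P) (x0 d : nat).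
Hypotheses (per : periodic_from a x0 d) (d_gt0 : 0 < d).

Lemma dfa_accepts_cut_loop (w1 w2 w3 : seq (letter P)) :
  foldl (@dfa_delta _ A) (dfa_init A) (w1 ++ w2) = foldl (@dfa_delta _ A) (dfa_init A) w1 ->
  dfa_accepts A (w1 ++ w2 ++ w3) = dfa_accepts A (w1 ++ w3).
Proof. by move=> loop; rewrite /dfa_accepts catA foldl_cat loop foldl_cat. Qed.

Lemma dfa_accepts_pump i j :
  i <= x0 -> x0 + #|dfa_state A| * d <= j -> dfa_accepts A (segment a i j) ->
  exists k, [/\ 0 < k, x0 + k * d <= j & dfa_accepts A (segment a i (j - k * d))].
Proof.
move=> ix0 big acc.
pose state (k : 'I_#|dfa_state A|.+1) :=
  foldl (@dfa_delta _ A) (dfa_init A) (segment a i (x0 + k * d)).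
have /injectivePn[s [t neq_st eq_st]] : ~~ injectiveb state.
  by apply/injectiveP => /leq_card; rewrite card_ord ltnn.
wlog lt_st : s t {neq_st} eq_st / s < t.
  move=> gen; case: (ltngtP s t) => [|lt_ts|/val_inj eq_st'].
  - exact: gen.
  - exact: gen (esym eq_st) lt_ts.
  - by rewrite eq_st' eqxx in neq_st.
have le_st : s * d <= t * d by rewrite leq_mul2r ltnW ?orbT.
have le_t : t * d <= #|dfa_state A| * d by rewrite leq_mul2r -ltnS ltn_ord orbT.
exists (t - s); split; [by rewrite subn_gt0 | by rewrite mulnBl; lia | move: acc].
set x1 := x0 + s * d; set x2 := x0 + t * d; set j' := j - (t - s) * d.
have -> : segment a i j = segment a i x1 ++ segment a x1 x2 ++ segment a x2 j.
  by rewrite -!segment_cat //; lia.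
have -> : segment a x2 j = segment a x1 j'.
  have shift := segment_periodic j' (periodic_fromM (t - s) per) (leq_addr _ x0 : x0 <= x1).
  by rewrite -shift; congr segment; rewrite mulnBl; lia.
rewrite dfa_accepts_cut_loop; last by rewrite -segment_cat ?eq_st //; lia.
by rewrite -segment_cat //; lia.
Qed.

Lemma dfa_accepts_bounded i j :
  i <= x0 -> x0 <= j -> dfa_accepts A (segment a i j) ->
  exists j' k, [/\ x0 <= j' < x0 + #|dfa_state A| * d, j = j' + k * d &
                   dfa_accepts A (segment a i j')].
Proof.
move=> ix0; elim/ltn_ind: j => j IH x0j acc.
case: (ltnP j (x0 + #|dfa_state A| * d)) => [small | big].
  by exists j, 0; rewrite addn0 x0j small.
have [k [k_gt0 kdj acc']] := dfa_accepts_pump ix0 big acc.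
have kd_gt0 : 0 < k * d by rewrite muln_gt0 k_gt0.
have [||j' [k' [j'_in jE acc'']]] := IH _ _ _ acc'; try lia.
exists j', (k' + k); split => //; rewrite mulnDl; lia.
Qed.

End Pumping.

Theorem lemma3 (P : finType) (u v : seq {set P}) (rho : regex P) (phi : psl P)
  (m : nat) :
  0 < size v ->
  min_dfa_size rho m ->
  let b := m.+1 in
  forall i, i <= size (u ++ v) - 1 ->
    (sat (wsuffix (lasso u v) i) (FTrig rho phi) <->
     (forall j, i < j < size u + b * size v ->
        rmatch (lasso u v) rho i j -> sat (wsuffix (lasso u v) j.-1) phi)).
Proof.
move=> v_gt0 [[A [recA cardA]] _] b i; rewrite size_cat => i_le.
have i_lt : i < size u + size v by lia.
have per : periodic_from (lasso u v) (size u) (size v) by exact: lasso_periodic.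
split=> [trig j /andP[ij _] mij | bounded k k_gt0 /rmatch_wsuffix].
  have := trig (j - i); rewrite wsuffixD rmatch_wsuffix addn0 subnKC ?(ltnW ij) //.
  have -> : i + (j - i).-1 = j.-1 by lia.
  by apply=> //; lia.
rewrite addn0 wsuffixD => mik.
have -> : i + k.-1 = (i + k).-1 by lia.
case: (ltnP (i + k) (size u + b * size v)) => [small | big].
  by apply: bounded mik; lia.
have per' : periodic_from (lasso u v) (size u + size v) (size v).
  by move=> n n_ge; apply: per; lia.
have [||j' [l [j'_in jE acc]]] := dfa_accepts_bounded per' v_gt0 (ltnW i_lt) _
  ((dfa_accepts_segment _ recA _).2 mik); try lia.
rewrite jE (_ : (j' + l * size v).-1 = j'.-1 + l * size v); last by lia.
rewrite (wsuffix_periodic (periodic_fromM _ per)); last by lia.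
apply: bounded; last by apply/(dfa_accepts_segment _ recA); lia.
rewrite cardA in j'_in; lia.
Qed.
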